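(* Let $U\subseteq\mathbb{R}^d$ be equipped with the Euclidean ($\ell_2$) metric, fix $t\in\mathbb{R}^d$, and let $f:U\to V\subseteq\mathbb{R}$ be such that there is $f_0:\mathbb{R}_{\ge0}\to\mathbb{R}$ with $f(x)=f_0(\|x-t\|)$ for all $x\in U$. Let $g(x,x')=g_0(\|x-x'\|)$ be a smooth growth function. Let $x\ne t$ and suppose $(w^*,z^* )$ with $w^*\ne z^*$ satisfies $B^*(x)=\frac{|f(w^* )-f(z^* )|}{\|w^*-z^*\|\,g(x,z^* )}$. Then there is a pair $(w_L,z_L)$ of points on the line connecting $x$ and $t$ such that $\frac{|f(w_L)-f(z_L)|}{\|w_L-z_L\|\,g(x,z_L)}\ge B^*(x)$.
   Context: A smooth growth function is $g(x,x')=g_0(\|x-x'\|)$ with $g_0:\mathbb{R}_{\ge0}\to\mathbb{R}_{\ge1}$ monotonically increasing, $g_0(0)=1$, $g_0(r_1+r_2)\le g_0(r_1)g_0(r_2)$. $B^*(x)$ denotes the $g$-smooth sensitivity of $f$ at $x$, i.e. $\sup_z\frac{\mathrm{L}_{f,\Lambda}(z)}{g(x,z)}$, where $\mathrm{L}_{f,\Lambda}(z)$ is the infimum of $K$ with $|f(z)-f(w)|\le K\|z-w\|$ for all $w$ with $\|z-w\|\le\Lambda$; $f$ is understood to extend by the same formula $f_0(\|\cdot-t\|)$ to all of $\mathbb{R}^d$. *)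

From HB Require Import structures.
From mathcomp Require Import all_boot all_order all_algebra.
From mathcomp Require Import all_classical all_reals all_analysis.
Set Implicit Arguments. Unset Strict Implicit. Unset Printing Implicit Defensive.
Import Order.TTheory GRing.Theory Num.Theory.
Local Open Scope classical_set_scope.
Local Open Scope ring_scope.

Definition enorm {R : realType} {d : nat} (v : 'rV[R]_d) : R :=
  Num.sqrt (\sum_(i < d) v ord0 i ^+ 2).

Definition smooth_growth {R : realType} (g0 : R -> R) : Prop :=
  [/\ (forall r, 0 <= r -> 1 <= g0 r),
      (forall r1 r2, 0 <= r1 -> r1 <= r2 -> g0 r1 <= g0 r2),
      g0 0 = 1 &
      (forall r1 r2, 0 <= r1 -> 0 <= r2 -> g0 (r1 + r2) <= g0 r1 * g0 r2)].

Definition growth {R : realType} {d : nat} (g0 : R -> R) (x x' : 'rV[R]_d) : R :=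
  g0 (enorm (x - x')).

Definition loc_lip {R : realType} {d : nat} (f : 'rV[R]_d -> R) (Lam : R)
    (z : 'rV[R]_d) : \bar R :=
  ereal_inf [set K%:E | K in [set K : R | 0 <= K /\
     forall w, enorm (z - w) <= Lam -> `|f z - f w| <= K * enorm (z - w)]].

Definition smooth_sens {R : realType} {d : nat} (f : 'rV[R]_d -> R) (Lam : R)
    (g0 : R -> R) (x : 'rV[R]_d) : \bar R :=
  ereal_sup [set (loc_lip f Lam z * ((growth g0 x z)^-1)%:E)%E | z in [set: 'rV[R]_d]].

Definition sens_ratio {R : realType} {d : nat} (f : 'rV[R]_d -> R) (g0 : R -> R)
    (x w z : 'rV[R]_d) : R :=
  `|f w - f z| / (enorm (w - z) * growth g0 x z).

Definition on_line {R : realType} {d : nat} (x t p : 'rV[R]_d) : Prop :=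
  exists s : R, p = x + s *: (t - x).

(* Move w = w^* and z = z^* onto the ray from t through x, keeping their
   distances a = |w - t| and b = |z - t| to t.  Since f is radial the values
   of f do not change, the two new points are at distance |a - b| <= |w - z|,
   and the image of z is at distance ||x - t| - b| <= |x - z| from x, so g
   does not grow.  Hence the ratio does not decrease.  If a = b the ratio at
   (w, z) is 0 and any pair of distinct points on the line will do. *)
From HB Require Import structures.
From mathcomp Require Import all_boot all_order all_algebra.
From mathcomp Require Import ring lra.
From mathcomp Require Import all_classical all_reals all_analysis.
Set Implicit Arguments. Unset Strict Implicit. Unset Printing Implicit Defensive.
Import Order.TTheory GRing.Theory Num.Theory.
Local Open Scope ring_scope.

Section EuclideanNorm.
Variables (R : realType) (d : nat).
Implicit Types u v : 'rV[R]_d.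

Definition edot u v : R := \sum_(i < d) u ord0 i * v ord0 i.

Lemma enorm_ge0 v : 0 <= enorm v.
Proof. exact: sqrtr_ge0. Qed.

Lemma enorm_sqr v : enorm v ^+ 2 = edot v v.
Proof.
rewrite sqr_sqrtr; last by apply: sumr_ge0 => i _; rewrite sqr_ge0.
by apply: eq_bigr => i _; rewrite expr2.
Qed.

Lemma enorm_eq0 v : (enorm v == 0) = (v == 0).
Proof.
apply/idP/eqP => [|->]; last first.
  by rewrite /enorm big1 ?sqrtr0 // => i _; rewrite mxE expr0n.
rewrite sqrtr_eq0 => sum_le0; apply/rowP => i; rewrite mxE; apply/eqP.
rewrite -sqrf_eq0 eq_le sqr_ge0 andbT; apply: le_trans sum_le0.
by rewrite (bigD1 i) //= lerDl sumr_ge0 // => j _; rewrite sqr_ge0.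
Qed.

Lemma enorm_gt0 v : (0 < enorm v) = (v != 0).
Proof. by rewrite lt_def enorm_eq0 enorm_ge0 andbT. Qed.

Lemma enorm0 : enorm (0 : 'rV[R]_d) = 0.
Proof. by apply/eqP; rewrite enorm_eq0. Qed.

Lemma enormZ c v : enorm (c *: v) = `|c| * enorm v.
Proof.
rewrite /enorm -sqrtr_sqr -sqrtrM ?sqr_ge0 // mulr_sumr.
by congr Num.sqrt; apply: eq_bigr => i _; rewrite mxE exprMn.
Qed.

Lemma enormN v : enorm (- v) = enorm v.
Proof. by rewrite -scaleN1r enormZ normrN normr1 mul1r. Qed.

Lemma enormD_sqr u v :
  enorm (u + v) ^+ 2 = enorm u ^+ 2 + 2 * edot u v + enorm v ^+ 2.
Proof.
rewrite !enorm_sqr /edot mulr_sumr -!big_split.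
by apply: eq_bigr => i _ /=; rewrite mxE; ring.
Qed.

Lemma cauchy_schwarz u v : edot u v <= enorm u * enorm v.
Proof.
have [->|u0] := eqVneq u 0.
  by rewrite enorm0 mul0r /edot big1 // => i _; rewrite mxE mul0r.
have [->|v0] := eqVneq v 0.
  by rewrite enorm0 mulr0 /edot big1 // => i _; rewrite mxE mulr0.
set P := enorm u * enorm v.
have P_gt0 : 0 < P by rewrite mulr_gt0 ?enorm_gt0.
have : 0 <= \sum_(i < d) (u ord0 i * enorm v - v ord0 i * enorm u) ^+ 2.
  by apply: sumr_ge0 => i _; rewrite sqr_ge0.
have -> : \sum_(i < d) (u ord0 i * enorm v - v ord0 i * enorm u) ^+ 2 =
          2 * P * (P - edot u v).
  transitivity (enorm v ^+ 2 * edot u u - 2 * P * edot u v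
                + enorm u ^+ 2 * edot v v).
    rewrite /edot !mulr_sumr -sumrB -big_split.
    by apply: eq_bigr => i _ /=; rewrite /P; ring.
  by rewrite -!enorm_sqr /P; ring.
by rewrite pmulr_rge0 ?subr_ge0 // mulr_gt0.
Qed.

Lemma ler_enormD u v : enorm (u + v) <= enorm u + enorm v.
Proof.
have := enormD_sqr u v; have := cauchy_schwarz u v.
have := enorm_ge0 (u + v); have := enorm_ge0 u; have := enorm_ge0 v.
nra.
Qed.

Lemma ler_dist_enorm u v : `|enorm u - enorm v| <= enorm (u - v).
Proof.
have := ler_enormD (u - v) v; rewrite subrK.
have := ler_enormD (v - u) u; rewrite subrK -opprB enormN.
by rewrite ler_norml; lra.
Qed.

End EuclideanNorm.

Section RayPoint.
Variables (R : realType) (d : nat) (t x : 'rV[R]_d).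

Definition ray_point (c : R) : 'rV[R]_d := t + (c / enorm (x - t)) *: (x - t).

Lemma ray_point_on_line c : on_line x t (ray_point c).
Proof.
exists (1 - c / enorm (x - t)); rewrite /ray_point scalerBl scale1r.
by rewrite -scalerN opprB addrA subrKC.
Qed.

Lemma ray_point0 : ray_point 0 = t.
Proof. by rewrite /ray_point mul0r scale0r addr0. Qed.

Hypothesis xt : x != t.

Let xt_gt0 : 0 < enorm (x - t).
Proof. by rewrite enorm_gt0 subr_eq0. Qed.

Lemma ray_point_self : ray_point (enorm (x - t)) = x.
Proof. by rewrite /ray_point divff ?gt_eqF // scale1r addrC subrK. Qed.

Lemma enorm_ray_pointB a b : enorm (ray_point a - ray_point b) = `|a - b|.
Proof.
rewrite /ray_point opprD addrACA subrr add0r -scalerBl -mulrBl.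
by rewrite enormZ normrM normfV (gtr0_norm xt_gt0) mulfVK ?gt_eqF.
Qed.

Lemma ray_point_eq a b : (ray_point a == ray_point b) = (a == b).
Proof. by rewrite -subr_eq0 -enorm_eq0 enorm_ray_pointB normr_eq0 subr_eq0. Qed.

Lemma enorm_ray_point_sub c : enorm (ray_point c - t) = `|c|.
Proof. by rewrite -ray_point0 enorm_ray_pointB subr0. Qed.

End RayPoint.

Section RadialProjection.
Variables (R : realType) (d : nat) (t x : 'rV[R]_d).
Variables (f0 : R -> R) (f : 'rV[R]_d -> R) (g0 : R -> R).
Hypothesis f_radial : forall y, f y = f0 (enorm (y - t)).
Hypothesis g0_gt0 : forall r, 0 <= r -> 0 < g0 r.
Hypothesis g0_le : forall r1 r2, 0 <= r1 -> r1 <= r2 -> g0 r1 <= g0 r2.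
Hypothesis xt : x != t.

Local Notation proj y := (ray_point t x (enorm (y - t))).

Lemma growth_gt0 z : 0 < growth g0 x z.
Proof. exact/g0_gt0/enorm_ge0. Qed.

Lemma sens_ratio_ge0 w z : 0 <= sens_ratio f g0 x w z.
Proof. by rewrite divr_ge0 ?mulr_ge0 ?enorm_ge0 ?(ltW (growth_gt0 _)). Qed.

Lemma f_proj y : f (proj y) = f y.
Proof.
by rewrite f_radial enorm_ray_point_sub // ger0_norm ?enorm_ge0 -?f_radial.
Qed.

Lemma enorm_projB w z : enorm (proj w - proj z) <= enorm (w - z).
Proof.
rewrite enorm_ray_pointB //.
by have := ler_dist_enorm (w - t) (z - t); rewrite opprB addrA subrK.
Qed.

Lemma growth_proj_le z : growth g0 x (proj z) <= growth g0 x z.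
Proof.
apply: g0_le; first exact: enorm_ge0.
rewrite -{1}(ray_point_self xt) enorm_ray_pointB //.
by have := ler_dist_enorm (x - t) (z - t); rewrite opprB addrA subrK.
Qed.

Lemma sens_ratio_proj w z :
  enorm (w - t) != enorm (z - t) ->
  sens_ratio f g0 x w z <= sens_ratio f g0 x (proj w) (proj z).
Proof.
move=> wz; rewrite /sens_ratio !f_proj.
apply: ler_wpM2l; first exact: normr_ge0.
have proj_neq : proj w - proj z != 0 by rewrite subr_eq0 ray_point_eq.
rewrite lef_pV2 ?posrE ?mulr_gt0 ?growth_gt0 ?enorm_gt0 //.
  exact: ler_pM (enorm_ge0 _) (ltW (growth_gt0 _)) (enorm_projB _ _)
                (growth_proj_le _).
by apply: contraNneq wz => /subr0_eq ->.
Qed.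

End RadialProjection.

Theorem mainTheorem12 (R : realType) (d : nat) (t : 'rV[R]_d)
    (f0 : R -> R) (f : 'rV[R]_d -> R) (g0 : R -> R) (Lam : R)
    (x wstar zstar : 'rV[R]_d) :
  (forall y, f y = f0 (enorm (y - t))) ->
  smooth_growth g0 ->
  x != t ->
  wstar != zstar ->
  smooth_sens f Lam g0 x = (sens_ratio f g0 x wstar zstar)%:E ->
  exists wL zL : 'rV[R]_d,
    [/\ on_line x t wL, on_line x t zL, wL != zL &
        (smooth_sens f Lam g0 x <= (sens_ratio f g0 x wL zL)%:E)%E].
Proof.
move=> f_radial [g0_ge1 g0_le _ _] xt _ ->.
have g0_gt0 r : 0 <= r -> 0 < g0 r by move/g0_ge1; apply: lt_le_trans.
have [same_dist|dist_neq] := eqVneq (enorm (wstar - t)) (enorm (zstar - t)).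
  exists (ray_point t x (enorm (x - t))), (ray_point t x 0).
  split; try exact: ray_point_on_line.
    by rewrite ray_point_eq // gt_eqF ?enorm_gt0 ?subr_eq0.
  rewrite lee_fin [X in X <= _]/sens_ratio !f_radial same_dist subrr normr0 mul0r.
  exact: sens_ratio_ge0 g0_gt0 _ _.
exists (ray_point t x (enorm (wstar - t))), (ray_point t x (enorm (zstar - t))).
split; try exact: ray_point_on_line.
  by rewrite ray_point_eq.
by rewrite lee_fin (sens_ratio_proj f_radial g0_gt0 g0_le).
Qed.
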